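(* Let $M$ be a matroid on a finite ground set $E$ with rank function $r$, and $k>0$ an integer. Then $\vec S_k$ is $\mathcal F_k$-separable: for all $\vec r,\vec r\,'\in\vec S_k$ with $\vec r\le\vec r\,'$ such that $\mathcal F_k$ forces neither $\vec r$ nor $\overleftarrow{r'}$, there is $(X,Y)\in\vec S_k$ that is $\mathcal F_k$-linked to $\vec r$ and such that $(Y,X)$ is $\mathcal F_k$-linked to $\overleftarrow{r'}$.
   Context: $\vec U$ is the set of all ordered bipartitions $(X,Y)$ of $E$ ($X\cup Y=E$, $X\cap Y=\emptyset$, parts possibly empty), a universe of separations with $(X,Y)\le(X',Y')$ iff $X\subseteq X'$, involution $(X,Y)^*=(Y,X)$, $(X,Y)\vee(X',Y')=(X\cup X',Y\cap Y')$, $(X,Y)\wedge(X',Y')=(X\cap X',Y\cup Y')$. Write $\overleftarrow s=\vec s^{\,*}$. Let $\lambda(X)=r(X)+r(E\setminus X)-r(M)$ and $\vec S_k=\{(X,Y)\in\vec U:\lambda(X)<k\}$, with separations $s=\{\vec s,\overleftarrow s\}$. A star is a nonempty $\sigma\subseteq\vec U$ with $\vec r\le\overleftarrow s$ for all distinct $\vec r,\vec s\in\sigma$. For a star $\sigma=\{(A_i,B_i):i=0,\dots,n\}$ (distinct elements) let $\langle\sigma\rangle=\sum_{i=0}^n r(B_i)-n\,r(M)$; $\mathcal F_k$ is the set of stars $\sigma\subseteq\vec U$ with $\langle\sigma\rangle<k$ (these are subsets of $\vec S_k$). $s$ is degenerate if $\vec s=\overleftarrow s$; $\vec r\in\vec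 S_k$ is trivial if some separation $s$ of $\vec S_k$ has $\vec r<\vec s$, $\vec r<\overleftarrow s$; $\mathcal F_k$ forces $\vec r$ if $\{\overleftarrow r\}\in\mathcal F_k$ or $r$ is degenerate (unforced elements are nontrivial and nondegenerate). For nontrivial nondegenerate $\vec r$, $\vec S_{\ge\vec r}$ is the set of all orientations of separations of $\vec S_k$ having an orientation $\ge\vec r$; for $\vec s_0\ge\vec r$ the shifting map $f:\vec S_{\ge\vec r}\to\vec U$ is $f(\vec s)=\vec s\vee\vec s_0$, $f(\overleftarrow s)=(\vec s\vee\vec s_0)^*$ for all $\vec s\in\vec S_{\ge\vec r}\setminus\{\overleftarrow r\}$ with $\vec s\ge\vec r$. $\vec s_0$ is linked to $\vec r$ if $\vec s_0\ge\vec r$ and $\vec s\vee\vec s_0\in\vec S_k$ for all $\vec s\in\vec S_k$ with $\vec s\ge\vec r$, $\vec s\ne\overleftarrow r$; it is $\mathcal F_k$-linked to $\vec r$ if moreover $f(\sigma)\in\mathcal F_k$ for every star $\sigma\in\mathcal F_k$ with $\sigma\subseteq\vec S_{\ge\vec r}\setminus\{\overleftarrow r\}$ having an element $\ge\vec r$. *)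

From HB Require Import structures.
From mathcomp Require Import all_boot all_order all_algebra.
Set Implicit Arguments. Unset Strict Implicit. Unset Printing Implicit Defensive.
Import GRing.Theory Num.Theory.

Record matroid (E : finType) := Matroid {
  rank : {set E} -> nat;
  rank_card : forall X, rank X <= #|X|;
  rank_mono : forall X Y : {set E}, X \subset Y -> rank X <= rank Y;
  rank_submod : forall X Y : {set E}, rank (X :|: Y) + rank (X :&: Y) <= rank X + rank Y
}.

Section Seps.
Variables (E : finType) (M : matroid E).
Local Notation r := (rank M).

(* An oriented separation (X,Y) in U is encoded by X : {set E}; its second
   part is Y = ~: X.
   Join: (X,Y) v (X',Y') = (X :|: X', Y :&: Y'), i.e. X :|: X'. *)
Definition sinv (s : {set E}) : {set E} := ~: s.
Definition sle (s t : {set E}) : bool := s \subset t.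
Definition slt (s t : {set E}) : bool := (s \subset t) && (s != t).
Definition sjoin (s t : {set E}) : {set E} := s :|: t.

Definition conn (X : {set E}) : nat := r X + r (~: X) - r setT.

Definition inSk (k : nat) (s : {set E}) : bool := conn s < k.

Definition star (sigma : {set {set E}}) : bool :=
  (sigma != set0) &&
  [forall s in sigma, forall t in sigma, (s != t) ==> sle s (sinv t)].

Definition star_order (sigma : {set {set E}}) : int :=
  (\sum_(s in sigma) (r (~: s))%:Z - ((#|sigma| - 1) * r setT)%:Z)%R.

Definition inFk (k : nat) (sigma : {set {set E}}) : bool :=
  star sigma && (star_order sigma < (k%:Z))%R.

Definition degenerate (s : {set E}) : bool := s == sinv s.

Definition trivial_sep (k : nat) (x : {set E}) : bool :=
  inSk k x &&
  [exists s, [&& inSk k s, inSk k (sinv s), slt x s & slt x (sinv s)]].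

Definition forces (k : nat) (x : {set E}) : Prop :=
  inFk k [set sinv x] \/ degenerate x.

Definition inSge (k : nat) (x s : {set E}) : bool :=
  [&& inSk k s, inSk k (sinv s) & (sle x s || sle x (sinv s))].

(* shifting map f onto s0 : f(s) = s v s0, f(s^* ) = (s v s0)^* for s >= r,
   s <> r^*. *)
Definition shift (x s0 s : {set E}) : {set E} :=
  if sle x s && (s != sinv x) then sjoin s s0
  else sinv (sjoin (sinv s) s0).

Definition linked (k : nat) (s0 x : {set E}) : Prop :=
  sle x s0 /\
  forall s, inSk k s -> sle x s -> s != sinv x -> inSk k (sjoin s s0).

Definition Fk_linked (k : nat) (s0 x : {set E}) : Prop :=
  linked k s0 x /\
  forall sigma : {set {set E}},
    inFk k sigma ->
    (forall s, s \in sigma -> inSge k x s && (s != sinv x)) ->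
    (exists2 s, s \in sigma & sle x s) ->
    inFk k (shift x s0 @: sigma).

End Seps.

From HB Require Import structures.
From mathcomp Require Import all_boot all_order all_algebra.
From mathcomp Require Import zify ring.
Import Order.TTheory GRing.Theory Num.Theory.
Set Implicit Arguments. Unset Strict Implicit. Unset Printing Implicit Defensive.

(* Take X of minimal connectivity among the sets between x and x'; by
   symmetry it suffices to show that X is F_k-linked to x.  Submodularity and
   the minimality of X give lambda(s \/ X) <= lambda(s) for every s >= x.
   Given a star sigma with an element a0 >= x, the shift sends a0 to a0 \/ X
   and, since x is nonempty, every other t in sigma to t \ X.  The order of the
   shifted star is bounded by that of sigma through a chain of submodular
   inequalities, one for each t <> a0, closed off by the minimality of X
   applied to a0 /\ X. *)

Lemma big_imset_collide (V : nmodType) (I J : finType) (h : I -> J)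
    (A : {set I}) (G : J -> V) :
  {in A &, forall a b, a != b -> h a = h b -> G (h a) = 0%R} ->
  (\sum_(j in h @: A) G j = \sum_(i in A) G (h i))%R.
Proof.
move=> Gcoll; rewrite (partition_big_imset h) /=.
apply: eq_bigr => _ /imsetP[a aA ->].
have [Ga0|Ganz] := eqVneq (G (h a)) 0%R.
  by rewrite Ga0 big1 // => i /andP[_ /eqP ->].
rewrite (big_pred1 a) // => i /=.
apply/andP/eqP => [[iA /eqP hia]|->]; last by rewrite aA.
by apply/eqP; apply: contraNT Ganz => ia; rewrite -hia (Gcoll i a).
Qed.

Section MatroidSeparations.
Variables (E : finType) (M : matroid E).
Local Notation r := (rank M).

Lemma rank0 : r set0 = 0.
Proof. by apply/eqP; rewrite -leqn0 -(cards0 E) rank_card. Qed.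

Lemma conn_rank X : conn M X + r setT = r X + r (~: X).
Proof.
have := rank_submod M X (~: X); rewrite setUCr setICr rank0 /conn; lia.
Qed.

Lemma connC X : conn M (~: X) = conn M X.
Proof. by rewrite /conn setCK addnC. Qed.

Lemma starP (sigma : {set {set E}}) :
  reflect (sigma != set0 /\
           {in sigma &, forall s t : {set E}, s != t -> s \subset ~: t})
          (star sigma).
Proof.
apply: (iffP andP) => -[ne H]; split=> //.
  move=> s t sS tS; exact: implyP (forall_inP (forall_inP H s sS) t tS).
by apply/forall_inP => s sS; apply/forall_inP => t tS; apply/implyP; apply: H.
Qed.

Lemma star_order_sum (sigma : {set {set E}}) : sigma != set0 ->
  star_order M sigma =
  ((r setT)%:Z + \sum_(s in sigma) ((r (~: s))%:Z - (r setT)%:Z))%R.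
Proof.
rewrite -card_gt0 /star_order sumrB sumr_const.
case: #|sigma| => // n _; rewrite subn1 /= mulrSr.
by rewrite -mulr_natl natz PoszM; ring.
Qed.

Lemma unforced_neq0 k x : 0 < k -> ~ forces M k x -> x != set0.
Proof.
move=> k_gt0 unforced; apply/eqP => x0; apply: unforced; left.
have ne1 : [set sinv x] != set0 by apply/set0Pn; exists (sinv x); apply: set11.
have star1 : star [set sinv x].
  by apply/starP; split=> // s t /set1P-> /set1P->; rewrite eqxx.
rewrite /inFk star1 star_order_sum // big_set1 /sinv setCK x0 rank0.
by rewrite sub0r addrN ltz_nat.
Qed.

(* Induction on T: removing t from T enlarges P by t /\ X, and the step is
   submodularity of r at ~: t and P :|: t :&: X. *)
Lemma sum_rank_setCU_le (X P : {set E}) (T : {set {set E}}) :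
  {in T &, forall t t' : {set E}, t != t' -> t \subset ~: t'} ->
  {in T, forall t, P \subset ~: t} -> P \subset X ->
  \sum_(t in T) r (~: t :|: X) + r P <= \sum_(t in T) r (~: t) + r X.
Proof.
elim: {T}#|T| {-2}T (erefl #|T|) P => [|n IH] T cardT P Tdisj PT PX.
  by move/eqP: cardT; rewrite cards_eq0 => /eqP->; rewrite !big_set0 rank_mono.
have [t tT] : exists t, t \in T by apply/card_gt0P; rewrite cardT.
rewrite !(big_setD1 t tT) /= -!addnA.
have Pt := PT t tT.
have IHt : \sum_(t' in T :\ t) r (~: t' :|: X) + r (P :|: t :&: X)
           <= \sum_(t' in T :\ t) r (~: t') + r X.
  apply: IH => [|t1 t2 /setD1P[_ t1T] /setD1P[_ t2T]|t' /setD1P[t't t'T]|].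
  - by move: cardT; rewrite (cardsD1 t T) tT => -[].
  - exact: Tdisj.
  - rewrite subUset PT //=; apply: subset_trans (subsetIl _ _) _.
    by apply: Tdisj; rewrite // eq_sym.
  - by rewrite subUset PX subsetIr.
have := rank_submod M (~: t) (P :|: t :&: X).
rewrite setUA (setUidPl Pt) setUIr [~: t :|: t]setUC setUCr setTI.
rewrite setIUr (setIidPr Pt) setIA [~: t :&: t]setIC setICr set0I setU0.
move: IHt; set S1 := \sum_(_ in _) _; set S2 := \sum_(_ in _) _; lia.
Qed.

Section ConnMinimal.
Variables (x X : {set E}).
Hypothesis xX : x \subset X.
Hypothesis connX_min :
  forall W : {set E}, x \subset W -> W \subset X -> conn M X <= conn M W.

Lemma rank_setCU_le (a : {set E}) :
  x \subset a -> r (~: (a :|: X)) + r X <= r (~: a) + r (a :&: X).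
Proof.
move=> xa; have := @connX_min (a :&: X) _ (subsetIr a X).
rewrite subsetI xa xX => /(_ isT).
have := conn_rank (a :&: X); have := conn_rank X.
have := rank_submod M (~: a) (~: X).
rewrite setCI setCU; lia.
Qed.

Lemma conn_setU_le (s : {set E}) : x \subset s -> conn M (s :|: X) <= conn M s.
Proof.
move=> xs; have := rank_setCU_le xs; have := rank_submod M s X.
have := conn_rank (s :|: X); have := conn_rank s; lia.
Qed.

Lemma linked_conn_min k : linked M k X x.
Proof.
split=> // s sk xs _; exact: leq_ltn_trans (conn_setU_le xs) sk.
Qed.

Section Shift.
Variables (sigma : {set {set E}}) (a0 : {set E}).
Hypotheses (x_neq0 : x != set0) (a0_sigma : a0 \in sigma) (x_a0 : x \subset a0)
  (a0_neq : a0 != ~: x).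
Hypothesis sigma_disj :
  {in sigma &, forall s t : {set E}, s != t -> s \subset ~: t}.
Local Notation f := (shift x X).

Lemma shift_a0 : f a0 = a0 :|: X.
Proof. by rewrite /shift /sle /sinv x_a0 a0_neq. Qed.

Lemma shift_other t : t \in sigma -> t != a0 -> f t = ~: (~: t :|: X).
Proof.
move=> tS t_a0; have x_t : ~~ (x \subset t).
  apply: contra x_neq0 => xt; rewrite -subset0 -(setICr a0) subsetI x_a0.
  exact: subset_trans xt (sigma_disj tS a0_sigma t_a0).
by rewrite /shift /sle (negbTE x_t).
Qed.

Lemma shift_disjoint a b :
  a \in sigma -> b \in sigma -> a != b -> f a \subset ~: f b.
Proof.
move=> aS bS ab; have a_b := sigma_disj aS bS ab.
have [a_a0|a_a0] := eqVneq a a0.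
  rewrite a_a0 shift_a0 shift_other -?a_a0 1?eq_sym // setCK in a_b *.
  exact: setSU.
have [b_a0|b_a0] := eqVneq b a0.
  rewrite b_a0 shift_a0 shift_other // setCS; apply: setSU.
  by apply: sigma_disj; rewrite // -b_a0 eq_sym.
rewrite !shift_other // setCK setCU setCK.
exact: subset_trans (subsetIl a _) (subset_trans a_b (subsetUl _ _)).
Qed.

Lemma star_shift : star (f @: sigma).
Proof.
apply/starP; split; first by apply/set0Pn; exists (f a0); apply: imset_f.
move=> _ _ /imsetP[a aS ->] /imsetP[b bS ->] fab.
by apply: shift_disjoint => //; apply: contraNneq fab => ->.
Qed.

Lemma sum_rank_shift_le :
  \sum_(s in sigma) r (~: f s) <= \sum_(s in sigma) r (~: s).
Proof.
rewrite !(big_setD1 a0 a0_sigma) /= shift_a0.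
rewrite (eq_bigr (fun s => r (~: s :|: X))) => [|s /setD1P[s_a0 sS]]; last first.
  by rewrite shift_other // setCK.
have chain : \sum_(t in sigma :\ a0) r (~: t :|: X) + r (a0 :&: X)
              <= \sum_(t in sigma :\ a0) r (~: t) + r X.
  apply: sum_rank_setCU_le (subsetIr a0 X).
    by move=> s t /setD1P[_ sS] /setD1P[_ tS]; apply: sigma_disj.
  move=> t /setD1P[t_a0 tS]; apply: subset_trans (subsetIl a0 X) _.
  by apply: sigma_disj; rewrite // eq_sym.
have := rank_setCU_le x_a0; move: chain.
set S1 := \sum_(_ in _) _; set S2 := \sum_(_ in _) _; lia.
Qed.

(* A collision f a = f b makes f a disjoint from itself, hence empty, and an
   empty element contributes r(E) - r(E) = 0 to the sum in [star_order_sum]. *)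
Lemma star_order_shift_le : (star_order M (f @: sigma) <= star_order M sigma)%R.
Proof.
have sigma_neq0 : sigma != set0 by apply/set0Pn; exists a0.
have image_neq0 : f @: sigma != set0 by rewrite imset_eq0.
rewrite !star_order_sum // lerD2l.
rewrite (big_imset_collide (G := fun u => (r (~: u))%:Z - (r setT)%:Z)%R); last first.
  move=> a b aS bS ab fab; have := shift_disjoint aS bS ab.
  by rewrite -fab -disjoints_subset -setI_eq0 setIid => /eqP->; rewrite setC0 subrr.
rewrite !sumrB lerD2r -!(big_morph Posz PoszD (erefl (Posz 0))) lez_nat.
exact: sum_rank_shift_le.
Qed.

End Shift.

Lemma Fk_linked_conn_min k : x != set0 -> Fk_linked M k X x.
Proof.
move=> x_neq0; split; first exact: linked_conn_min.
move=> sigma /andP[/starP[_ sigma_disj] order_lt] in_Sge [a0 a0_sigma x_a0].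
have a0_neq : a0 != ~: x by case/andP: (in_Sge a0 a0_sigma).
rewrite /inFk (star_shift x_neq0 a0_sigma x_a0 a0_neq sigma_disj).
exact: le_lt_trans (star_order_shift_le x_neq0 a0_sigma x_a0 a0_neq sigma_disj) _.
Qed.

End ConnMinimal.
End MatroidSeparations.

Theorem lemma5p15 (E : finType) (M : matroid E) (k : nat) (hk : 0 < k) :
  forall x x' : {set E},
    inSk M k x -> inSk M k x' -> sle x x' ->
    ~ forces M k x -> ~ forces M k (sinv x') ->
    exists X : {set E},
      [/\ inSk M k X, Fk_linked M k X x & Fk_linked M k (sinv X) (sinv x')].
Proof.
move=> x x' xk _ xx' x_unforced x'_unforced.
pose between (W : {set E}) := (x \subset W) && (W \subset x').
have between_x : between x by rewrite /between subxx.
have [X /andP[xX Xx'] X_min] := arg_minnP (conn M) between_x.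
exists X; split.
- exact: leq_ltn_trans (X_min x _) xk.
- apply: Fk_linked_conn_min (unforced_neq0 hk x_unforced) => // W xW WX.
  by apply: X_min; rewrite /between xW (subset_trans WX Xx').
- apply: Fk_linked_conn_min (unforced_neq0 hk x'_unforced) => [|W x'W WX].
    by rewrite /sinv setCS.
  rewrite connC -(connC M W); apply: X_min.
  rewrite /between -[x']setCK setCS x'W andbT.
  by apply: subset_trans xX _; rewrite -setCS setCK.
Qed.
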